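(* Consider the following RSS-based localization setting. A stationary target is at an unknown position $\mathbf{s}=(x,y,0)\in\mathbb{R}^3$. There are $N$ UAVs; UAV $i$ ($1\le i\le N$) takes $M_i\ge 1$ measurements, the $j$-th one at position $\mathbf{u}_{i,j}=(x_{i,j},y_{i,j},h_{i,j})$. Let $r_{i,j}=\sqrt{(x-x_{i,j})^2+(y-y_{i,j})^2}$ (horizontal distance), $d_{i,j}=\sqrt{r_{i,j}^2+h_{i,j}^2}$, and let $\beta_{i,j}$ be the horizontal UAV–target angle, i.e. $(x_{i,j}-x,\,y_{i,j}-y)=r_{i,j}(\cos\beta_{i,j},\sin\beta_{i,j})$, with $\mathbf{g}_{i,j}=(\cos\beta_{i,j},\sin\beta_{i,j})^T$. The $j$-th measurement of UAV $i$ is $R_{i,j}=p_0-10\gamma\log_{10}(d_{i,j})+\eta_{i,j}$ with known $p_0$, $\gamma>0$ and independent noises $\eta_{i,j}\sim\mathcal{N}(0,\sigma_i^2)$, $\sigma_i>0$. The Fisher information matrix for $(x,y)$ is $$\mathbf{F}=\Big(\frac{10\gamma}{\ln 10}\Big)^2\sum_{i=1}^N\sum_{j=1}^{M_i}\sigma_i^{-2}\frac{r_{i,j}^2}{d_{i,j}^4}\mathbf{g}_{i,j}\mathbf{g}_{i,j}^T.$$ A configuration (choice of all $\mathbf{u}_{i,j}$) is feasible if $r_{i,j}\ge r_0$, $h_{i,j}\ge h_0$ for all $i,j$, and $\|\mathbf{u}_{i,j}-\mathbf{u}_{i,j-1}\|\le t_0c_{\max}$ for $2\le j\le M_i$, where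 $r_0,h_0,t_0>0$ and $c_{\max}\ge 0$ are given. Problem P is to maximize $\det\mathbf{F}$ over feasible configurations. Assume the UAVs hover, i.e. $c_{\max}=0$, so $\mathbf{u}_{i,j}=\mathbf{u}_i$ (and $r_{i,j}=r_i$, $h_{i,j}=h_i$, $d_{i,j}=d_i$, $\mathbf{g}_{i,j}=\mathbf{g}_i$) for all $j$. Let $t$ be an index with $M_t\sigma_t^{-2}=\max\{M_i\sigma_i^{-2}:1\le i\le N\}$, and let $r^*=\max\{r_0,h_0\}$. If $M_t\sigma_t^{-2}\le\frac12\sum_{i=1}^N M_i\sigma_i^{-2}$, then any configuration satisfying $r_i=r^*$ and $h_i=h_0$ for all $i=1,\dots,N$, together with $$\sum_{i=1}^N M_i\sigma_i^{-2}\frac{r_i^2}{d_i^4}\mathbf{g}_i\mathbf{g}_i^T=\frac12\Big(\sum_{i=1}^N M_i\sigma_i^{-2}\frac{r_i^2}{d_i^4}\Big)\mathbf{I},$$ is an optimal solution of problem P.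
   Context: $\mathbf{I}$ is the $2\times 2$ identity matrix. All UAV positions are known to the UAVs; the optimization is over UAV positions for a given target position $\mathbf{s}$. *)

From HB Require Import structures.
From mathcomp Require Import all_boot all_order all_algebra.
From mathcomp Require Import all_classical all_reals exp.
Set Implicit Arguments. Unset Strict Implicit. Unset Printing Implicit Defensive.
Import Order.TTheory GRing.Theory Num.Theory.
Local Open Scope ring_scope.

Section RSS.
Variable R : realType.

(* A point3 (x, y, h) of R^3 is encoded as ((x, y), h). *)
Definition point3 := (R * R * R)%type.

(* A configuration: U i j is the position of the j-th measurement of UAV i
   (0-based: j ranges over 0 <= j < M i; values for j >= M i are irrelevant). *)
Definition config (N : nat) := 'I_N -> nat -> point3.

Definition hdist (x y : R) (u : point3) : R :=
  Num.sqrt ((x - u.1.1) ^+ 2 + (y - u.1.2) ^+ 2).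

Definition height (u : point3) : R := u.2.

Definition dist3 (x y : R) (u : point3) : R :=
  Num.sqrt (hdist x y u ^+ 2 + height u ^+ 2).

Definition gvec (x y : R) (u : point3) : 'cV[R]_2 :=
  \col_(k < 2) (if k == 0 :> nat then (u.1.1 - x) / hdist x y u
                else (u.1.2 - y) / hdist x y u).

Definition norm3 (u v : point3) : R :=
  Num.sqrt ((u.1.1 - v.1.1) ^+ 2 + (u.1.2 - v.1.2) ^+ 2 + (u.2 - v.2) ^+ 2).

Definition FIM (N : nat) (M : 'I_N -> nat) (sigma : 'I_N -> R) (gamma : R)
    (x y : R) (U : config N) : 'M[R]_2 :=
  ((10%:R * gamma / ln (10%:R : R)) ^+ 2) *:
    \sum_(i < N) \sum_(j < M i)
       ((sigma i ^+ 2)^-1 * (hdist x y (U i j) ^+ 2 / dist3 x y (U i j) ^+ 4))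
         *: (gvec x y (U i j) *m (gvec x y (U i j))^T).

Definition feasible (N : nat) (M : 'I_N -> nat) (r0 h0 t0 cmax x y : R)
    (U : config N) : Prop :=
  forall (i : 'I_N) (j : nat), (j < M i)%N ->
    [/\ r0 <= hdist x y (U i j), h0 <= height (U i j)
      & (1 <= j)%N -> norm3 (U i j) (U i j.-1) <= t0 * cmax].

Definition optimal (N : nat) (M : 'I_N -> nat) (sigma : 'I_N -> R) (gamma : R)
    (r0 h0 t0 cmax x y : R) (U : config N) : Prop :=
  feasible M r0 h0 t0 cmax x y U /\
  forall U' : config N, feasible M r0 h0 t0 cmax x y U' ->
    \det (FIM M sigma gamma x y U') <= \det (FIM M sigma gamma x y U).

Definition hover (N : nat) (u : 'I_N -> point3) : config N := fun i _ => u i.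

End RSS.

From HB Require Import structures.
From mathcomp Require Import all_boot all_order all_algebra.
From mathcomp Require Import all_classical all_reals exp.
From mathcomp Require Import ring lra.
Set Implicit Arguments. Unset Strict Implicit. Unset Printing Implicit Defensive.
Import Order.TTheory GRing.Theory Num.Theory.
Local Open Scope ring_scope.

(* A symmetric 2x2 matrix [[a, b], [b, d]] has det = ad - b^2 <= ((a + d) / 2)^2,
   with equality iff it is a multiple of the identity; so det F is bounded by
   the square of half its trace.  Each term of tr F is a weight times
   r^2 / (r^2 + h^2)^2, which under r >= r0 and h >= h0 is maximal at h = h0
   and r = max r0 h0.  The given configuration attains both bounds. *)

Lemma det_mx2 (R : comPzRingType) (A : 'M[R]_2) :
  \det A = A 0 0 * A 1 1 - A 0 1 * A 1 0.
Proof.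
rewrite (expand_det_row _ 0) !big_ord_recl big_ord0 addr0 /cofactor !det_mx11.
rewrite /= !mxE /= expr0 expr1 mul1r mulN1r mulrN.
by congr (A _ _ * A _ _ - A _ _ * A _ _); apply: val_inj.
Qed.

Lemma mxtrace_mx2 (R : pzSemiRingType) (A : 'M[R]_2) : \tr A = A 0 0 + A 1 1.
Proof.
rewrite /mxtrace !big_ord_recl big_ord0 addr0.
by congr (A _ _ + A _ _); apply: val_inj.
Qed.

Lemma det_le_sqr_half_mxtrace (R : realFieldType) (A : 'M[R]_2) :
  A^T = A -> \det A <= (\tr A / 2) ^+ 2.
Proof.
move=> symA; have A10 : A 1 0 = A 0 1 by rewrite -[in LHS]symA mxE.
rewrite det_mx2 mxtrace_mx2 A10.
have := sqr_ge0 (A 0 0 - A 1 1); have := sqr_ge0 (A 0 1); nra.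
Qed.

Section RatioBounds.
Variable R : realFieldType.
Implicit Types p q P Q : R.

Lemma div_sqrDr_antitone p q Q :
  0 <= p -> 0 < Q -> Q <= q -> p / (p + q) ^+ 2 <= p / (p + Q) ^+ 2.
Proof.
move=> p_ge0 Q_gt0 Qq; apply: ler_wpM2l => //.
rewrite lef_pV2 ?posrE ?exprn_gt0 ?lerXn2r ?nnegrE //; lra.
Qed.

Lemma div_sqrD_le_cross p Q P :
  0 < p + Q -> 0 < P + Q -> p * (P + Q) ^+ 2 <= P * (p + Q) ^+ 2 ->
  p / (p + Q) ^+ 2 <= P / (P + Q) ^+ 2.
Proof.
move=> pQ PQ le; rewrite ler_pdivrMr ?exprn_gt0 // mulrAC ler_pdivlMr ?exprn_gt0 //.
Qed.

Lemma div_sqrD_le_diag p Q :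
  0 <= p -> 0 < Q -> p / (p + Q) ^+ 2 <= Q / (Q + Q) ^+ 2.
Proof.
move=> p_ge0 Q_gt0; apply: div_sqrD_le_cross; try lra.
have := sqr_ge0 (p - Q); have : 0 <= p * Q by apply: mulr_ge0; lra.
nra.
Qed.

Lemma div_sqrDl_antitone p P Q :
  0 < Q -> Q <= P -> P <= p -> p / (p + Q) ^+ 2 <= P / (P + Q) ^+ 2.
Proof.
move=> Q_gt0 QP Pp; apply: div_sqrD_le_cross; try lra.
have QQ_le : Q * Q <= p * P by apply: ler_pM; lra.
have : (p - P) * (Q ^+ 2 - p * P) <= 0 by apply: mulr_ge0_le0; rewrite ?expr2; lra.
nra.
Qed.

Lemma sqr_div_sqrD_le_max (r h r0 h0 : R) :
  0 < r0 -> 0 < h0 -> r0 <= r -> h0 <= h ->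
  r ^+ 2 / (r ^+ 2 + h ^+ 2) ^+ 2
    <= Num.max r0 h0 ^+ 2 / (Num.max r0 h0 ^+ 2 + h0 ^+ 2) ^+ 2.
Proof.
move=> r0_gt0 h0_gt0 r0r h0h.
have h0_le : r ^+ 2 / (r ^+ 2 + h ^+ 2) ^+ 2 <= r ^+ 2 / (r ^+ 2 + h0 ^+ 2) ^+ 2.
  by rewrite div_sqrDr_antitone ?sqr_ge0 ?exprn_gt0 // lerXn2r ?nnegrE //; lra.
apply: le_trans h0_le _.
have [r0h0|h0r0] := leP r0 h0.
  exact: div_sqrD_le_diag (sqr_ge0 _) (exprn_gt0 2 h0_gt0).
by apply: div_sqrDl_antitone; rewrite ?exprn_gt0 // lerXn2r ?nnegrE //; lra.
Qed.

End RatioBounds.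

Section Geometry.
Variables (R : realType) (x y : R).
Implicit Type u : point3 R.

Lemma hdist_sqr u : hdist x y u ^+ 2 = (x - u.1.1) ^+ 2 + (y - u.1.2) ^+ 2.
Proof. by rewrite /hdist sqr_sqrtr // addr_ge0 // sqr_ge0. Qed.

Lemma dist3_exp4 u :
  dist3 x y u ^+ 4 = (hdist x y u ^+ 2 + height u ^+ 2) ^+ 2.
Proof.
by rewrite /dist3 -[4%N]/(2 * 2)%N exprM sqr_sqrtr // addr_ge0 // sqr_ge0.
Qed.

Lemma mxtrace_gvec_outer u :
  0 < hdist x y u -> \tr (gvec x y u *m (gvec x y u)^T) = 1.
Proof.
move=> r_gt0; rewrite mxtrace_mx2 !mxE !big_ord1 !mxE /= -!expr2.
rewrite !expr_div_n -mulrDl.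
have -> : (u.1.1 - x) ^+ 2 + (u.1.2 - y) ^+ 2 = hdist x y u ^+ 2.
  by rewrite hdist_sqr; ring.
by rewrite divff // expf_neq0 // gt_eqF.
Qed.

End Geometry.

Section FisherInformation.
Variables (R : realType) (N : nat) (M : 'I_N -> nat) (sigma : 'I_N -> R).
Variables (gamma x y : R).
Implicit Type U : config R N.

Local Notation K := ((10%:R * gamma / ln (10%:R : R)) ^+ 2).
Local Notation gain u := (hdist x y u ^+ 2 / dist3 x y u ^+ 4).

Lemma trmx_FIM U : (FIM M sigma gamma x y U)^T = FIM M sigma gamma x y U.
Proof.
apply/matrixP => k l; rewrite !mxE !summxE; congr (_ * _).
apply: eq_bigr => i _; rewrite !summxE; apply: eq_bigr => j _.
by rewrite !mxE !big_ord1 !mxE [X in _ * X]mulrC.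
Qed.

Lemma mxtrace_FIM U : (forall i (j : 'I_(M i)), 0 < hdist x y (U i j)) ->
  \tr (FIM M sigma gamma x y U)
    = K * \sum_(i < N) \sum_(j < M i) (sigma i ^+ 2)^-1 * gain (U i j).
Proof.
move=> r_gt0; rewrite mxtrace_mx2 !mxE -mulrDr; congr (_ * _).
rewrite !summxE -big_split; apply: eq_bigr => i _.
rewrite !summxE -big_split; apply: eq_bigr => j _.
by rewrite /= [X in X + _]mxE [X in _ + X]mxE -mulrDr -mxtrace_mx2
  mxtrace_gvec_outer ?mulr1.
Qed.

Lemma FIM_hover (u : 'I_N -> point3 R) :
  FIM M sigma gamma x y (hover u)
    = K *: \sum_(i < N) ((M i)%:R / sigma i ^+ 2 * gain (u i))
                          *: (gvec x y (u i) *m (gvec x y (u i))^T).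
Proof.
rewrite /FIM /hover; congr (_ *: _); apply: eq_bigr => i _.
by rewrite sumr_const card_ord scalerMnl -mulr_natl mulrA.
Qed.

Variables (r0 h0 t0 cmax : R).
Hypotheses (r0_gt0 : 0 < r0) (h0_gt0 : 0 < h0).
Local Notation rmax := (Num.max r0 h0).

Lemma feasible_hdist_gt0 U : feasible M r0 h0 t0 cmax x y U ->
  forall i (j : 'I_(M i)), 0 < hdist x y (U i j).
Proof.
by move=> hU i j; have [r0r _ _] := hU i j (ltn_ord j); exact: lt_le_trans r0r.
Qed.

Lemma mxtrace_FIM_ge0 U : feasible M r0 h0 t0 cmax x y U ->
  0 <= \tr (FIM M sigma gamma x y U).
Proof.
move=> /feasible_hdist_gt0 r_gt0; rewrite mxtrace_FIM //.
apply/mulr_ge0/sumr_ge0 => [|i _]; first exact: sqr_ge0.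
apply: sumr_ge0 => j _.
by rewrite mulr_ge0 ?invr_ge0 ?sqr_ge0 ?divr_ge0 ?exprn_ge0 ?sqr_ge0 ?sqrtr_ge0.
Qed.

Lemma mxtrace_FIM_le U : feasible M r0 h0 t0 cmax x y U ->
  \tr (FIM M sigma gamma x y U)
    <= K * \sum_(i < N) (M i)%:R / sigma i ^+ 2
                         * (rmax ^+ 2 / (rmax ^+ 2 + h0 ^+ 2) ^+ 2).
Proof.
move=> hU; rewrite mxtrace_FIM; last exact: feasible_hdist_gt0 hU.
apply/ler_wpM2l/ler_sum => [|i _]; first exact: sqr_ge0.
set gmax := rmax ^+ 2 / _.
have -> : (M i)%:R / sigma i ^+ 2 * gmax = \sum_(j < M i) (sigma i ^+ 2)^-1 * gmax.
  by rewrite sumr_const card_ord -[RHS]mulr_natl mulrA.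
apply: ler_sum => j _; apply: ler_wpM2l; first by rewrite invr_ge0 sqr_ge0.
have [r0r h0h _] := hU i j (ltn_ord j).
by rewrite dist3_exp4 sqr_div_sqrD_le_max.
Qed.

End FisherInformation.

Theorem theorem3 (R : realType) (N : nat) (M : 'I_N -> nat)
    (hM : forall i, (1 <= M i)%N)
    (sigma : 'I_N -> R) (hsigma : forall i, 0 < sigma i)
    (gamma : R) (hgamma : 0 < gamma)
    (r0 h0 t0 cmax : R) (hr0 : 0 < r0) (hh0 : 0 < h0) (ht0 : 0 < t0)
    (hcmax : cmax = 0)
    (x y : R)
    (t : 'I_N)
    (ht : forall i, (M i)%:R / sigma i ^+ 2 <= (M t)%:R / sigma t ^+ 2)
    (hbal : (M t)%:R / sigma t ^+ 2
            <= 2^-1 * \sum_(i < N) (M i)%:R / sigma i ^+ 2)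
    (u : 'I_N -> point3 R)
    (hr : forall i, hdist x y (u i) = Num.max r0 h0)
    (hh : forall i, height (u i) = h0)
    (hiso : \sum_(i < N)
              ((M i)%:R / sigma i ^+ 2 * (hdist x y (u i) ^+ 2 / dist3 x y (u i) ^+ 4))
                *: (gvec x y (u i) *m (gvec x y (u i))^T)
            = (2^-1 * \sum_(i < N)
                 ((M i)%:R / sigma i ^+ 2 * (hdist x y (u i) ^+ 2 / dist3 x y (u i) ^+ 4)))
                *: 1%:M) :
  optimal M sigma gamma r0 h0 t0 cmax x y (hover u).
Proof.
(* ht and hbal only guarantee that some configuration satisfies hiso. *)
split.
  move=> i j _; rewrite /hover hr hh le_max lexx; split=> // _.
  by rewrite /norm3 !subrr expr0n /= !addr0 sqrtr0 hcmax mulr0.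
move=> U hU.
set K := (10%:R * gamma / ln (10%:R : R)) ^+ 2.
set S := \sum_(i < N) (M i)%:R / sigma i ^+ 2
            * (Num.max r0 h0 ^+ 2 / (Num.max r0 h0 ^+ 2 + h0 ^+ 2) ^+ 2).
have detF : \det (FIM M sigma gamma x y (hover u)) = (K * S / 2) ^+ 2.
  rewrite FIM_hover hiso scalerA scalemx1 det_scalar -/K.
  have -> : \sum_(i < N) (M i)%:R / sigma i ^+ 2
                * (hdist x y (u i) ^+ 2 / dist3 x y (u i) ^+ 4) = S.
    by apply: eq_bigr => i _; rewrite dist3_exp4 hr hh.
  by rewrite mulrCA mulrC.
apply: le_trans (det_le_sqr_half_mxtrace (trmx_FIM M sigma gamma x y U)) _.
have trF_ge0 := mxtrace_FIM_ge0 sigma gamma hr0 hU.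
have trF_le := mxtrace_FIM_le sigma gamma hr0 hh0 hU.
rewrite detF lerXn2r ?nnegrE ?divr_ge0 ?(le_trans trF_ge0 trF_le) //.
by apply: ler_wpM2r; rewrite ?invr_ge0 ?ler0n.
Qed.
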